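(* Let $\mathcal{H}=(X,Y,E)$ be a bipartite graph with $Y=\{y_1,\dots,y_\ell\}$, let $R$ be a relation on attributes $X$, and let $\mathcal{E}_{\mathcal{H}}(R)=\{L(v) : v \text{ a node of } T_{\mathcal{H}}(R),\ L(v)\neq\bot^*\}$. Then $\mathcal{E}_{\mathcal{H}}(R)$ is $\mathcal{H}$-equivalent to $R$ and $|\mathcal{E}_{\mathcal{H}}(R)|\le e\cdot\phi(\mathcal{H})$, where $\phi(\mathcal{H})=\ell!\prod_{j\in[\ell]} d_{\mathcal{H}}(y_j)$.
   Context: $d_{\mathcal{H}}(v)$ is the degree of $v$ in $\mathcal{H}$; $t[z]$ is the value of tuple $t$ at attribute $z$; $e$ is Euler's number. A tuple $t$ over $Y$ is $\mathcal{H}$-accepted by a relation $R$ on $X$ if some $t_R\in R$ satisfies $t_R[x_i]\neq t[y_j]$ for all $(x_i,y_j)\in E$; relations $R_1,R_2$ on $X$ are $\mathcal{H}$-equivalent if they $\mathcal{H}$-accept exactly the same tuples over $Y$. Construction of $T_{\mathcal{H}}(R)$: a rooted tree whose nodes have labels $L(v)$ that are either tuples of $R$ or the symbol $\bot^*$, and whose edges have labels $(y_j,a)$. Initially it is a single root labeled $\bot^*$. The tuples of $R$ are scanned one by one in an arbitrary order; when $t$ is scanned, every leaf $v$ with $L(v)=\bot^*$, whose root-to-$v$ path has edge labels $(y_{j_1},a_{j_1}),\dots,(y_{j_p},a_{j_p})$, is processed: if there exist $j\in\{j_1,\dots,j_p\}$ and $(x_i,y_j)\in E$ with $t[x_i]=a_j$,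 nothing is done; otherwise set $L(v)=t$, and if $p<\ell$, for every edge $(x_i,y_j)\in E$ with $j\notin\{j_1,\dots,j_p\}$ add a new child of $v$ labeled $\bot^*$ via an edge labeled $(y_j,t[x_i])$. The construction stops when all tuples are scanned or no leaf has label $\bot^*$. *)

From mathcomp Require Import all_boot.
Set Implicit Arguments. Unset Strict Implicit. Unset Printing Implicit Defensive.

Section Defs.
Variables (X : finType) (l : nat) (D : eqType).
(* Bipartite graph H = (X, Y, E) with Y = {y_0,...,y_(l-1)} encoded as 'I_l;
   an edge (x_i, y_j) is the pair (x_i, j) \in E. *)
Variable E : {set X * 'I_l}.

Definition degY (j : 'I_l) : nat := #|[set x : X | (x, j) \in E]|.

Definition phiH : nat := l`! * \prod_(j < l) degY j.

(* tuples over X are {ffun X -> D}; tuples over Y are functions 'I_l -> D *)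
Definition Haccepted (R : seq {ffun X -> D}) (t : 'I_l -> D) : Prop :=
  exists2 tR, tR \in R & forall x j, (x, j) \in E -> tR x != t j.

Definition Hequiv (R1 R2 : seq {ffun X -> D}) : Prop :=
  forall t : 'I_l -> D, Haccepted R1 t <-> Haccepted R2 t.

(* A node is represented by its root-to-node path: the
   sequence of edges (x_i, y_j) used to create its ancestors (with the value
   a = t[x_i] giving the edge label (y_j, a)), together with its label:
   None = bot*, Some t = the tuple t. *)
Definition pathT := seq (X * 'I_l * D).
Definition nodeT := (pathT * option {ffun X -> D})%type.

Definition path_ys (p : pathT) : seq 'I_l := [seq e.1.2 | e <- p].

Definition blocked (t : {ffun X -> D}) (p : pathT) : bool :=
  has (fun e => [exists x : X, ((x, e.1.2) \in E) && (t x == e.2)]) p.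

Definition children (t : {ffun X -> D}) (p : pathT) : seq nodeT :=
  if size p < l then
    [seq (rcons p (xe.1, xe.2, t xe.1), None)
       | xe <- enum E & xe.2 \notin path_ys p]
  else [::].

Definition process (t : {ffun X -> D}) (n : nodeT) : seq nodeT :=
  match n.2 with
  | Some _ => [:: n]
  | None => if blocked t n.1 then [:: n] else (n.1, Some t) :: children t n.1
  end.

Definition step (ns : seq nodeT) (t : {ffun X -> D}) : seq nodeT :=
  flatten [seq process t n | n <- ns].

(* The tree built by scanning the tuples of R in the order given by s.
   (Stopping early when no bot*-leaf is left changes nothing, since then
   further steps are the identity.) *)
Definition TH (s : seq {ffun X -> D}) : seq nodeT :=
  foldl step [:: ([::], None)] s.

Definition EH (s : seq {ffun X -> D}) : seq {ffun X -> D} :=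
  undup (pmap snd (TH s)).
End Defs.

From mathcomp Require Import all_boot.
From Stdlib Require Import Reals Lra.

Set Implicit Arguments. Unset Strict Implicit. Unset Printing Implicit Defensive.

(* Correctness rests on an invariant: until a tuple accepting t has become a
   label, some bot*-leaf has a path all of whose edge labels (y_j, a) satisfy
   a = t[y_j].  A scanned tuple t' that accepts t is not blocked at that leaf
   and becomes its label; one that does not has an edge (x_i, y_j) with
   t'[x_i] = t[y_j], so either it is blocked there or y_j is new on the path
   and the child along (x_i, y_j) is again such a leaf.
   For the size bound, a node is determined by the sequence of edges (x_i, y_j)
   on its path, whose Y-ends are distinct.  Sorting such sequences by their
   first edge shows there are at most sum_k l!/(l-k)! * prod_j d(y_j), and
   sum_k l!/(l-k)! = l! * sum_k 1/k! <= e * l!. *)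

Lemma prefix_rconsr (T : eqType) (s t : seq T) x :
  prefix s (rcons t x) = (s == rcons t x) || prefix s t.
Proof.
elim: t s => [|y t IH] [|z s] //=; rewrite eqseq_cons.
  by rewrite orbF; case: s.
by rewrite IH andb_orr.
Qed.

Lemma uniq_map_inj_in (S T : eqType) (f : S -> T) (s : seq S) :
  uniq (map f s) -> {in s &, injective f}.
Proof.
elim: s => //= a s IH /andP[fa_s us] x y; rewrite !inE.
case/orP=> [/eqP->|xs] /orP[/eqP->|ys] // fxy.
- by rewrite fxy map_f in fa_s.
- by rewrite -fxy map_f in fa_s.
- exact: IH.
Qed.

Lemma uniq_flatten_map (S T : eqType) (g : S -> seq T) (s : seq S) :
  uniq s -> {in s, forall a, uniq (g a)} ->
  {in s &, forall a b x, x \in g a -> x \in g b -> a = b} ->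
  uniq (flatten (map g s)).
Proof.
elim: s => //= a s IH /andP[a_s us] ug disj.
have sub_s : {subset s <= a :: s} by move=> b bs; rewrite inE bs orbT.
rewrite cat_uniq ug ?mem_head // IH // => [|b bs|b c bs cs]; last 2 first.
- exact: ug (sub_s _ bs).
- exact: disj (sub_s _ bs) (sub_s _ cs).
rewrite andbT; apply/hasPn => x /flatten_mapP[b bs xb]; apply/negP => xa.
by move: a_s; rewrite (disj a b (mem_head _ _) (sub_s _ bs) x xa xb) bs.
Qed.

Lemma sum_count_head (T : finType) (L : seq (seq T)) :
  \sum_(e : T) count (fun p => ohead p == Some e) L = count (predC (pred1 [::])) L.
Proof.
elim: L => [|p L IH]; first by rewrite big1.
rewrite big_split /= IH; congr (_ + _); case: p => [|x p] /=; first by rewrite big1.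
by rewrite (bigD1 x) //= eqxx big1 // => e ne; case: eqP => // -[ex]; rewrite ex eqxx in ne.
Qed.

Lemma size_le_head_counts (T : finType) (L : seq (seq T)) : uniq L ->
  size L <= 1 + \sum_(e : T) count (fun p => ohead p == Some e) L.
Proof.
move=> uL; rewrite sum_count_head -(count_predC (pred1 [::]) L) leq_add2r.
by rewrite (count_uniq_mem _ uL) leq_b1.
Qed.

(* [arrangements m] = \sum_(k <= m) m`! %/ k`! is the number of repetition-free
   sequences over an m-element set. *)
Fixpoint arrangements (m : nat) : nat :=
  if m is m'.+1 then 1 + m * arrangements m' else 1.

Section EdgePaths.
Variables (X : finType) (l : nat) (E : {set X * 'I_l}).

Definition edge_path (U : seq 'I_l) (p : seq (X * 'I_l)) : bool :=
  all (fun e => (e \in E) && (e.2 \in U)) p && uniq (map snd p).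

Lemma edge_path_cons U e p : uniq U ->
  edge_path U (e :: p) = [&& e \in E, e.2 \in U & edge_path (rem e.2 U) p].
Proof.
move=> uU; rewrite /edge_path /= -!andbA; do 2!congr (_ && _).
rewrite andbA; congr (_ && _); rewrite -has_pred1 has_map -all_predC -all_predI.
by apply: eq_all => f /=; rewrite (mem_rem_uniq _ uU) !inE andbCA andbC.
Qed.

Lemma card_edges_at j : #|[pred e | (e \in E) && (e.2 == j)]| = degY E j.
Proof.
have pair_j_inj : injective (fun x : X => (x, j)) by move=> x y [].
rewrite /degY -(card_imset _ pair_j_inj); apply: eq_card => -[x j'] /=.
rewrite inE; apply/andP/imsetP => [[xjE /= /eqP <-]|[y]]; first by exists x; rewrite ?inE.
by rewrite inE => yjE [-> ->].
Qed.

Lemma sum_edges_over U (F : 'I_l -> nat) : uniq U ->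
  \sum_(e in E | e.2 \in U) F e.2 = \sum_(j <- U) degY E j * F j.
Proof.
move=> uU; rewrite big_uniq // (partition_big snd (fun j => j \in U)) => [|e /andP[] //].
apply: eq_bigr => j jU.
rewrite (eq_bigl (fun e => (e \in E) && (e.2 == j))); last first.
  by move=> e; case: eqP => [->|_]; rewrite ?andbF // jU !andbT.
transitivity (\sum_(e in E | e.2 == j) F j); first by apply: eq_bigr => e /andP[_ /eqP->].
by rewrite sum_nat_const card_edges_at.
Qed.

Lemma behead_edge_paths U L e : uniq U -> uniq L -> all (edge_path U) L ->
  let L' := [seq behead p | p <- L & ohead p == Some e] in
  uniq L' /\ all (edge_path (rem e.2 U)) L'.
Proof.
move=> uU uL /allP pathsL L'.
have headE p : p \in [seq p <- L | ohead p == Some e] -> p = e :: behead p.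
  by case: p => [|a p]; rewrite mem_filter //= => /andP[/eqP[->]].
have pathL' p : p \in [seq p <- L | ohead p == Some e] ->
    [&& e \in E, e.2 \in U & edge_path (rem e.2 U) (behead p)].
  move=> pe; rewrite -edge_path_cons // -headE //; apply: pathsL.
  by move: pe; rewrite mem_filter => /andP[].
split.
  rewrite map_inj_in_uniq ?filter_uniq // => p q pe qe eq_pq.
  by rewrite (headE p pe) (headE q qe) eq_pq.
by apply/allP => _ /mapP[p pe ->]; case/and3P: (pathL' p pe).
Qed.

Lemma size_le_edge_heads U L : uniq L -> all (edge_path U) L ->
  size L <= 1 + \sum_(e in E | e.2 \in U) count (fun p => ohead p == Some e) L.
Proof.
move=> uL /allP pathsL; apply: leq_trans (size_le_head_counts uL) _.
rewrite leq_add2l [leqRHS]big_mkcond leq_sum // => e _; case: ifP => // edgeU.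
rewrite leqn0 -(negbK (_ == 0)) -lt0n -has_count; apply/hasP => -[[|f p] // pL /eqP[fe]].
by move: (pathsL _ pL); rewrite /edge_path /= fe edgeU.
Qed.

Hypothesis degY_gt0 : forall j, 0 < degY E j.

Lemma size_edge_paths U L : uniq U -> uniq L -> all (edge_path U) L ->
  size L <= arrangements (size U) * \prod_(j <- U) degY E j.
Proof.
move sU: (size U) => m; elim: m U L sU => [|m IH] U L sU uU uL pathsL.
  apply: leq_trans (size_le_edge_heads uL pathsL) _.
  by rewrite (size0nil sU) big_pred0 ?big_nil // => e; rewrite in_nil andbF.
have count_le e : e.2 \in U -> count (fun p => ohead p == Some e) L <=
    arrangements m * \prod_(j <- rem e.2 U) degY E j.
  move=> eU; have [uL' pathsL'] := behead_edge_paths e uU uL pathsL.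
  rewrite -size_filter -(size_map behead).
  by apply: (IH _ _ _ (rem_uniq _ uU) uL' pathsL'); rewrite size_rem // sU.
apply: leq_trans (size_le_edge_heads uL pathsL) _.
apply: (@leq_trans
  (1 + \sum_(e in E | e.2 \in U) arrangements m * \prod_(j <- rem e.2 U) degY E j)).
  by rewrite leq_add2l; apply: leq_sum => e /andP[_]; exact: count_le.
rewrite (sum_edges_over (fun j => arrangements m * \prod_(i <- rem j U) degY E i)) //.
rewrite (eq_big_seq (fun _ => arrangements m * \prod_(j <- U) degY E j)) => [|j jU]; last first.
  by rewrite (big_rem j jU) mulnCA.
rewrite big_const_seq count_predT iter_addn_0 sU /=.
have : 0 < \prod_(j <- U) degY E j by apply: prodn_gt0.
move: (arrangements m) (\prod_(j <- U) degY E j) => a P P_gt0.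
by rewrite mulnDl mul1n mulnAC [m.+1 * a]mulnC leq_add2r.
Qed.
End EdgePaths.

Section Tree.
Variables (X : finType) (l : nat) (D : eqType) (E : {set X * 'I_l}).

Local Notation node := (nodeT X l D).

Definition node_edges (n : node) : seq (X * 'I_l) := map fst n.1.

Definition pending (n : node) : bool := n.2 == None.

Definition labels (ns : seq node) : seq {ffun X -> D} := pmap snd ns.

Definition child (t : {ffun X -> D}) (p : pathT X l D) (xe : X * 'I_l) : node :=
  (rcons p (xe.1, xe.2, t xe.1), None).

Lemma path_ys_edges (n : node) : path_ys n.1 = map snd (node_edges n).
Proof. by rewrite /path_ys -map_comp. Qed.

Lemma node_edges_child t (n : node) xe :
  node_edges (child t n.1 xe) = rcons (node_edges n) xe.
Proof. by rewrite /node_edges map_rcons; case: xe. Qed.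

Lemma processP t (n n' : node) : n' \in process E t n ->
  [\/ n' = n /\ process E t n = [:: n],
      n' = (n.1, Some t) /\ pending n
    | exists2 xe, n' = child t n.1 xe &
        [/\ pending n, xe \in E & xe.2 \notin path_ys n.1]].
Proof.
rewrite /process /pending; case: n => p [tr|] /=.
  by rewrite inE => /eqP->; constructor 1.
case: ifP => _; first by rewrite inE => /eqP->; constructor 1.
rewrite inE => /predU1P[->|]; first by constructor 2.
rewrite /children; case: ifP => // _ /mapP[xe].
by rewrite mem_filter mem_enum => /andP[xe_new xeE] ->; constructor 3; exists xe.
Qed.

Lemma process_edges t (n n' : node) : n' \in process E t n ->
  node_edges n' = node_edges n \/
  pending n /\ exists xe, node_edges n' = rcons (node_edges n) xe.
Proof.
case/processP => [[->]|[->]|[xe -> [pn _ _]]]; [by left | by left |].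
by right; split => //; exists xe; rewrite node_edges_child.
Qed.

Lemma uniq_process_edges t (n : node) : uniq (map node_edges (process E t n)).
Proof.
rewrite /process; case: n.2 => //; case: ifP => // _.
rewrite /children; case: ifP => // _ /=.
rewrite -map_comp (eq_map (node_edges_child t n)) (map_inj_uniq (@rcons_injr _ _)).
rewrite filter_uniq ?enum_uniq // andbT; apply/mapP => -[xe _ /(congr1 size)].
by rewrite size_rcons /node_edges /= size_map => /n_Sn.
Qed.

Lemma mem_stepP t (ns : seq node) n' :
  reflect (exists2 n, n \in ns & n' \in process E t n) (n' \in step E ns t).
Proof. exact: flatten_mapP. Qed.

Definition edges_valid (ns : seq node) : bool :=
  all (fun n => edge_path E (enum 'I_l) (node_edges n)) ns.

Definition pending_leaves (ns : seq node) : Prop :=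
  {in ns &, forall n m, pending n ->
     prefix (node_edges n) (node_edges m) -> node_edges m = node_edges n}.

Lemma edges_valid_step t ns : edges_valid ns -> edges_valid (step E ns t).
Proof.
move=> /allP valid; apply/allP => n' /mem_stepP[n ns_n].
case/processP => [[-> _]|[-> _]|[xe -> [_ xeE xe_new]]]; [exact: valid | exact: valid n ns_n |].
move: (valid n ns_n) => /=; rewrite node_edges_child /edge_path all_rcons map_rcons rcons_uniq.
by rewrite xeE mem_enum -path_ys_edges xe_new => /andP[-> ->].
Qed.

Lemma process_edges_inj t ns n m n' m' : pending_leaves ns ->
  n \in ns -> m \in ns -> n' \in process E t n -> m' \in process E t m ->
  node_edges n' = node_edges m' -> node_edges n = node_edges m.
Proof.
move=> leaves ns_n ns_m /process_edges[->|[pn [xe ->]]] /process_edges[->|[pm [xe' ->]]] //.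
- by move=> e_nm; apply: leaves => //; rewrite e_nm prefix_rcons.
- by move=> e_nm; apply/esym/leaves => //; rewrite -e_nm prefix_rcons.
- by move/rcons_inj => [].
Qed.

Lemma uniq_edges_step t ns : uniq (map node_edges ns) -> pending_leaves ns ->
  uniq (map node_edges (step E ns t)).
Proof.
move=> u leaves; rewrite /step map_flatten -map_comp.
apply: uniq_flatten_map => [||n m ns_n ns_m _ /mapP[n' pn' ->] /mapP[m' pm' e]].
- exact: map_uniq u.
- by move=> n _; apply: uniq_process_edges.
- apply: (uniq_map_inj_in u ns_n ns_m).
  exact: process_edges_inj leaves ns_n ns_m pn' pm' e.
Qed.

Lemma pending_processP t (n n' : node) : n' \in process E t n -> pending n' ->
  pending n /\
  (n' = n /\ process E t n = [:: n] \/ exists xe, node_edges n' = rcons (node_edges n) xe).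
Proof.
case/processP => [[-> proc_n] pn|[-> _] //|[xe -> [pn _ _]] _]; first by split; [|left].
by split; [|right; exists xe; rewrite node_edges_child].
Qed.

Lemma pending_leaves_step t ns : uniq (map node_edges ns) -> pending_leaves ns ->
  pending_leaves (step E ns t).
Proof.
move=> u leaves n' m' /mem_stepP[n ns_n pn'] /mem_stepP[m ns_m pm'] pend_n'.
have [pend_n n'E] := pending_processP pn' pend_n'.
have no_ext xe : ~~ prefix (rcons (node_edges n) xe) (node_edges m).
  apply/negP => ext; have := leaves n m ns_n ns_m pend_n (prefix_trans (prefix_rcons _ _) ext).
  by move=> e_mn; move: (size_prefix ext); rewrite e_mn size_rcons ltnn.
case: n'E => [[-> proc_n]|[xe ->]]; case/process_edges: (pm') => [->|[_ [xe' e_m']]].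
- exact: leaves.
- rewrite e_m' prefix_rconsr => /orP[/eqP-> //|/(leaves _ _ ns_n ns_m pend_n) e_mn].
  move: pm'; rewrite (uniq_map_inj_in u ns_m ns_n e_mn) proc_n inE => /eqP m'_n.
  by move: (congr1 size e_m'); rewrite m'_n e_mn size_rcons => /n_Sn.
- by move=> ext; case/negP: (no_ext xe).
- by rewrite e_m' prefix_rconsr (negPf (no_ext xe)) orbF => /eqP.
Qed.

Definition tree_wf (ns : seq node) : Prop :=
  [/\ uniq (map node_edges ns), edges_valid ns & pending_leaves ns].

Lemma tree_wf_TH s : tree_wf (TH E s).
Proof.
have wf_root : tree_wf [:: ([::], None)].
  by split=> // n m; rewrite !inE => /eqP-> /eqP->.
rewrite /TH; elim: s [:: _] wf_root => //= t s IH ns [u valid leaves]; apply: IH.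
split; [exact: uniq_edges_step | exact: edges_valid_step | exact: pending_leaves_step].
Qed.

Lemma labels_step t ns : {subset labels (step E ns t) <= t :: labels ns}.
Proof.
move=> tr; rewrite /labels mem_pmap => /mapP[n' /mem_stepP[n ns_n]].
case/processP => [[-> _]|[-> _]|[xe -> _]] // tr_n; rewrite inE mem_pmap.
  by apply/orP; right; apply/mapP; exists n.
by case: tr_n => ->; rewrite eqxx.
Qed.

Lemma labels_fold_sub s ns : {subset labels ns <= labels (foldl (step E) ns s)}.
Proof.
elim: s ns => [|t s IH] ns tr // tr_ns; apply: IH.
move: tr_ns; rewrite /labels !mem_pmap => /mapP[n ns_n tr_n]; apply/mapP; exists n => //.
by apply/mem_stepP; exists n => //; rewrite /process -tr_n mem_head.
Qed.

Lemma labels_TH s : {subset labels (TH E s) <= s}.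
Proof.
have fold_sub ns : {subset labels (foldl (step E) ns s) <= labels ns ++ s}.
  elim: s ns => [|t s IH] ns tr /=; first by rewrite cats0.
  move/IH; rewrite !mem_cat inE => /orP[/labels_step|->]; last by rewrite !orbT.
  by rewrite inE => /predU1P[->|->]; rewrite ?eqxx ?orbT.
exact: fold_sub.
Qed.

Section Acceptance.
Variable t0 : 'I_l -> D.

Definition accepts (tr : {ffun X -> D}) : bool :=
  [forall x, [forall j, ((x, j) \in E) ==> (tr x != t0 j)]].

Lemma acceptsP (tr : {ffun X -> D}) :
  reflect (forall x j, (x, j) \in E -> tr x != t0 j) (accepts tr).
Proof.
apply: (iffP forallP) => [acc x j xjE|acc x]; last by apply/forallP => j; apply/implyP/acc.
by move/forallP/(_ j)/implyP: (acc x); apply.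
Qed.

Definition consistent (p : pathT X l D) : bool := all (fun e => e.2 == t0 e.1.2) p.

Definition has_consistent_leaf (ns : seq node) : bool :=
  has (fun n => pending n && consistent n.1) ns.

Lemma accepts_not_blocked t p : consistent p -> accepts t -> ~~ blocked E t p.
Proof.
move=> /allP cons_p /acceptsP acc; apply/hasPn => e p_e.
apply/existsP => -[x /andP[xE /eqP te]].
by move: (acc _ _ xE); rewrite te (eqP (cons_p e p_e)) eqxx.
Qed.

Lemma step_accepting t ns : has_consistent_leaf ns -> accepts t ->
  t \in labels (step E ns t).
Proof.
case/hasP=> n ns_n /andP[pend_n cons_n] acc_t.
rewrite mem_pmap; apply/mapP; exists (n.1, Some t) => //; apply/mem_stepP; exists n => //.
by rewrite /process (eqP pend_n) (negPf (accepts_not_blocked cons_n acc_t)) mem_head.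
Qed.

Lemma step_consistent_leaf t ns :
  edges_valid ns -> has_consistent_leaf ns -> ~~ accepts t ->
  has_consistent_leaf (step E ns t).
Proof.
move=> /allP valid /hasP[n ns_n /andP[pend_n cons_n]].
move=> /forallPn[x /forallPn[j]]; rewrite negb_imply negbK => /andP[xjE /eqP txj].
have [blocked_n|free_n] := boolP (blocked E t n.1).
  apply/hasP; exists n; last by rewrite pend_n cons_n.
  by apply/mem_stepP; exists n => //; rewrite /process (eqP pend_n) blocked_n mem_head.
have j_new : j \notin path_ys n.1.
  apply: contra free_n => /mapP[e p_e j_e]; apply/hasP; exists e => //.
  by apply/existsP; exists x; rewrite -j_e xjE txj j_e eq_sym (allP cons_n e p_e).
have size_n : size n.1 < l.
  case/andP: (valid n ns_n) => _; rewrite -path_ys_edges => u.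
  have u' : uniq (j :: path_ys n.1) by rewrite /= j_new u.
  by have := max_card (mem (j :: path_ys n.1)); rewrite (card_uniqP u') card_ord /= size_map.
apply/hasP; exists (child t n.1 (x, j)); last by rewrite /consistent all_rcons /= txj eqxx.
apply/mem_stepP; exists n => //; rewrite /process (eqP pend_n) (negPf free_n) inE.
by rewrite /children size_n map_f ?orbT // mem_filter mem_enum xjE j_new.
Qed.

Lemma accepted_label_fold ns s tR : edges_valid ns -> has_consistent_leaf ns ->
  tR \in s -> accepts tR -> has accepts (labels (foldl (step E) ns s)).
Proof.
elim: s ns => //= t s IH ns valid leaf; rewrite inE => s_tR acc_tR.
have [acc_t|rej_t] := boolP (accepts t).
  by apply/hasP; exists t => //; apply/labels_fold_sub/step_accepting.
apply: IH; [exact: edges_valid_step | exact: step_consistent_leaf | | exact: acc_tR].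
by case/predU1P: s_tR => // eq_t; rewrite -eq_t acc_tR in rej_t.
Qed.
End Acceptance.

Lemma EH_Hequiv (s : seq {ffun X -> D}) : Hequiv E (EH E s) s.
Proof.
move=> t0; split=> -[tr tr_in acc_tr].
  by exists tr => //; move: tr_in; rewrite mem_undup; apply: labels_TH.
have /hasP[tr' tr'_lab /acceptsP acc'] : has (accepts t0) (labels (TH E s)).
  by apply: (accepted_label_fold _ _ tr_in) => //; apply/acceptsP.
by exists tr'; rewrite ?mem_undup.
Qed.

Lemma size_EH (s : seq {ffun X -> D}) : (forall j, 0 < degY E j) ->
  size (EH E s) <= arrangements l * \prod_(j < l) degY E j.
Proof.
move=> degY_gt0; case: (tree_wf_TH s) => u valid _.
apply: leq_trans (size_undup _) _; rewrite size_pmap.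
apply: leq_trans (count_size _ _) _; rewrite -(size_map node_edges) -big_enum /=.
rewrite -[in arrangements l](size_enum_ord l).
apply: size_edge_paths => //; first exact: enum_uniq.
by rewrite all_map.
Qed.

End Tree.

Section ArrangementsBound.

Lemma fact_factorial n : Factorial.fact n = n`!.
Proof. by elim: n => // n IH; rewrite factS -IH. Qed.

Local Open Scope R_scope.

Lemma sum_inv_fact_le_e m : sum_f_R0 (fun k => / INR (Factorial.fact k)) m <= exp 1.
Proof.
rewrite /exp; case: (exist_exp 1) => e /= e_lim.
rewrite (sum_eq _ (fun k => / INR (Factorial.fact k) * 1 ^ k)) => [|k _]; last first.
  by rewrite pow1 Rmult_1_r.
apply: sum_incr e_lim _ => k; rewrite pow1 Rmult_1_r.
exact/Rlt_le/Rinv_0_lt_compat/INR_fact_lt_0.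
Qed.

Lemma arrangementsE m :
  INR (arrangements m) = INR (Factorial.fact m) * sum_f_R0 (fun k => / INR (Factorial.fact k)) m.
Proof.
elim: m => [|m IH]; first by rewrite /=; field.
change (arrangements m.+1) with (1 + m.+1 * arrangements m)%nat.
rewrite plus_INR mult_INR IH tech5 fact_simpl mult_INR.
have fact_neq0 := INR_fact_neq_0 m; have m_ge0 := pos_INR m.
rewrite [INR m.+1]S_INR; change (INR 1) with 1; field; split; lra.
Qed.

Lemma arrangements_le_e m : INR (arrangements m) <= exp 1 * INR (m`!).
Proof.
rewrite arrangementsE -fact_factorial Rmult_comm.
apply: Rmult_le_compat_r; [exact: pos_INR | exact: sum_inv_fact_le_e].
Qed.

End ArrangementsBound.

Theorem lemma3 (X : finType) (l : nat) (D : eqType) (E : {set X * 'I_l})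
    (s : seq {ffun X -> D}) :
  uniq s ->
  (forall j : 'I_l, 0 < degY E j) ->
  Hequiv E (EH E s) s /\
  (INR (size (EH E s)) <= exp 1 * INR (phiH E))%R.
Proof.
move=> _ degY_gt0; split; first exact: EH_Hequiv.
apply: Rle_trans (le_INR _ _ (leP (size_EH s degY_gt0))) _.
rewrite /phiH !mult_INR -Rmult_assoc.
by apply: Rmult_le_compat_r; [exact: pos_INR | exact: arrangements_le_e].
Qed.
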